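(* Let $n\ge 5$ and $\Delta,\Delta'\in\mathcal{P}_n$. If there exists $i\in\mathbb{Z}_n$ such that $lab_\Delta((i+1,i))=lab_{\Delta'}((i+1,i))=\oplus$ and $lab_\Delta((i-1,i))\neq lab_{\Delta'}((i-1,i))$, and moreover $lab_\Delta((j,j-1))=lab_{\Delta'}((j,j-1))$ for all $j\in\mathbb{Z}_n$, then $f^{(\Delta)}_{8,n}\neq f^{(\Delta')}_{8,n}$.
   Context: Cells are indexed by $\mathbb{Z}_n=\{0,\dots,n-1\}$, indices modulo $n$. Rule $8$ has local rule $r_8(x_1,x_2,x_3)=\neg x_1\wedge x_2\wedge x_3$ and global function $f_{8,n}(x)_i=r_8(x_{i-1},x_i,x_{i+1})$. An update schedule is an ordered partition $\Delta=(\Delta_1,\dots,\Delta_k)$ of $\mathbb{Z}_n$ into nonempty blocks; $\mathcal{P}_n$ is the set of them. For a block $B$ let $f^{(B)}(x)_i=f_{8,n}(x)_i$ if $i\in B$ and $x_i$ otherwise; $f^{(\Delta)}_{8,n}=f^{(\Delta_k)}\circ\cdots\circ f^{(\Delta_1)}$. (The paper states the conclusion as inequality of the transition digraphs with arcs $(x,f^{(\Delta)}_{8,n}(x))$, equivalent to inequality of the maps.) For $u,v\in\mathbb{Z}_n$ with $u\in\Delta_a$, $v\in\Delta_b$, $lab_\Delta((u,v))=\oplus$ if $b\le a$ and $\ominus$ if $a<b$. *)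

From mathcomp Require Import all_boot.
Set Implicit Arguments. Unset Strict Implicit. Unset Printing Implicit Defensive.

(* Cells are 'I_n; i+1 is ordS i, i-1 is ord_pred i (cyclic, mod n). *)
Definition config (n : nat) := {ffun 'I_n -> bool}.

Definition r8 (x1 x2 x3 : bool) : bool := ~~ x1 && x2 && x3.

Definition f8 (n : nat) (x : config n) : config n :=
  [ffun i => r8 (x (ord_pred i)) (x i) (x (ordS i))].

Definition update_schedule (n : nat) (D : seq {set 'I_n}) : bool :=
  all (fun B : {set 'I_n} => B != set0) D && [forall i : 'I_n, count (fun B : {set 'I_n} => i \in B) D == 1].

Definition block_update (n : nat) (B : {set 'I_n}) (x : config n) : config n :=
  [ffun i => if i \in B then f8 x i else x i].

(* f^(Delta) = f^(Delta_k) o ... o f^(Delta_1). *)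
Definition f8_sched (n : nat) (D : seq {set 'I_n}) (x : config n) : config n :=
  foldl (fun y B => block_update B y) x D.

(* 0-based index a of the block containing u. *)
Definition block_index (n : nat) (D : seq {set 'I_n}) (u : 'I_n) : nat :=
  find (fun B : {set 'I_n} => u \in B) D.

Inductive label := Oplus | Ominus.

Definition lab (n : nat) (D : seq {set 'I_n}) (u v : 'I_n) : label :=
  if block_index D v <= block_index D u then Oplus else Ominus.

From mathcomp Require Import all_boot.

Set Implicit Arguments.
Unset Strict Implicit.

(* Under a schedule every cell is updated exactly once, at the time of its own
   block, reading its neighbours as they are at that time. Start from the
   configuration that is 0 only at i - 3. If i - 1 is updated no earlier than
   i, cell i reads a 1 on its left and becomes 0. If i - 1 is updated strictly
   before i and i + 1 not before i, then i - 2 is still 1 when i - 1 is updated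
   (it is either not yet updated, or updated next to the 0 at i - 3), so i - 1
   becomes 0 and i then stays 1. For n >= 5 the cells i - 3, ..., i + 1 are
   distinct, so this configuration separates the two schedules. *)

Section SequentialUpdate.
Variable n : nat.
Implicit Types (D L : seq {set 'I_n}) (x : config n) (c : 'I_n).

Lemma f8_sched_false L x c : x c = false -> f8_sched L x c = false.
Proof.
elim: L x => //= B L IH x xc; apply: IH.
by rewrite ffunE; case: (c \in B); rewrite // ffunE /r8 xc andbF.
Qed.

Lemma f8_sched_notin L x c :
  ~~ has (fun B : {set 'I_n} => c \in B) L -> f8_sched L x c = x c.
Proof.
elim: L x => //= B L IH x /norP [cB cL].
by rewrite IH // ffunE (negbTE cB).
Qed.

Lemma f8_sched_take_early D m x c :
  m <= block_index D c -> f8_sched (take m D) x c = x c.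
Proof.
rewrite /block_index; elim: D m x => [|B D IH] [|m] x //=.
case: ifP => // cB lt_mD; rewrite IH //.
by rewrite ffunE cB.
Qed.

Lemma f8_sched_take_late D m x c :
  count (fun B : {set 'I_n} => c \in B) D = 1 -> block_index D c < m ->
  f8_sched (take m D) x c = f8 (f8_sched (take (block_index D c) D) x) c.
Proof.
rewrite /block_index; elim: D m x => [|B D IH] [|m] x //=.
case: ifP => cB; last exact: IH.
rewrite add1n => -[count_cD] _.
have count_take0 : count (fun B : {set 'I_n} => c \in B) (take m D) = 0.
  apply/eqP; rewrite -leqn0 -count_cD.
  by rewrite -{2}(cat_take_drop m D) count_cat leq_addr.
by rewrite f8_sched_notin ?has_count ?count_take0 // ffunE cB.
Qed.

Lemma update_schedule_count D c : update_schedule D ->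
  count (fun B : {set 'I_n} => c \in B) D = 1.
Proof. by case/andP => _ /forallP count1; apply/eqP; exact: count1. Qed.

Lemma block_index_lt_size D c : update_schedule D -> block_index D c < size D.
Proof. by move=> sD; rewrite -has_find has_count update_schedule_count. Qed.

Lemma f8_sched_take_updated D m x c :
  update_schedule D -> block_index D c < m ->
  f8_sched (take m D) x c =
  r8 (f8_sched (take (block_index D c) D) x (ord_pred c)) (x c)
     (f8_sched (take (block_index D c) D) x (ordS c)).
Proof.
move=> sD lt_cm.
rewrite f8_sched_take_late ?update_schedule_count // ffunE.
by rewrite (f8_sched_take_early x (leqnn (block_index D c))).
Qed.

Lemma f8_sched_take_left_true D m x c :
  update_schedule D -> block_index D c < m ->
  f8_sched (take (block_index D c) D) x (ord_pred c) = true ->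
  f8_sched (take m D) x c = false.
Proof. by move=> sD lt_cm left1; rewrite f8_sched_take_updated // left1. Qed.

Lemma f8_sched_take_stays_true D m x c :
  update_schedule D -> m <= block_index D (ordS c) ->
  x (ord_pred c) = false -> x c = true -> x (ordS c) = true ->
  f8_sched (take m D) x c = true.
Proof.
move=> sD le_mS x_left x_c x_right.
have [le_mc | lt_cm] := leqP m (block_index D c).
  by rewrite f8_sched_take_early.
have le_cS : block_index D c <= block_index D (ordS c).
  exact: ltnW (leq_trans lt_cm le_mS).
rewrite f8_sched_take_updated // f8_sched_false //.
by rewrite (f8_sched_take_early x le_cS) x_c x_right.
Qed.

Lemma f8_sched_left_pending D x i :
  update_schedule D -> block_index D i <= block_index D (ord_pred i) ->
  x (ord_pred i) = true -> f8_sched D x i = false.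
Proof.
move=> sD le_iP x_left; rewrite -(take_size D).
apply: (f8_sched_take_left_true sD (block_index_lt_size _ sD)).
by rewrite f8_sched_take_early.
Qed.

Lemma f8_sched_left_updated D x i :
  update_schedule D ->
  block_index D (ord_pred i) < block_index D i <= block_index D (ordS i) ->
  x (ord_pred (ord_pred (ord_pred i))) = false ->
  x (ord_pred (ord_pred i)) = true -> x (ord_pred i) = true ->
  x i = true -> x (ordS i) = true ->
  f8_sched D x i = true.
Proof.
move=> sD /andP [lt_Pi le_iS] x3 x2 x1 x0 xS.
rewrite -(take_size D) f8_sched_take_updated ?block_index_lt_size //.
rewrite (f8_sched_take_early x le_iS) x0 xS.
rewrite (f8_sched_take_left_true sD lt_Pi) //.
by apply: f8_sched_take_stays_true; rewrite ?ord_predK.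
Qed.

End SequentialUpdate.

Lemma iter_ordS_neq n k (j : 'I_n) : 0 < k < n -> iter k (@ordS n) j != j.
Proof.
move=> /andP [k_gt0 lt_kn].
have val_iter m : iter m (@ordS n) j = (j + m) %% n :> nat.
  elim: m => [|m IHm] /=; first by rewrite addn0 modn_small.
  by rewrite IHm -addn1 modnDml addn1 addnS.
apply: contraTneq k_gt0 => /(congr1 val) /=; rewrite val_iter.
rewrite -[X in _ = X](modn_small (ltn_ord j)) -[X in _ = X %% n]addn0 => /eqP.
by rewrite eqn_modDl mod0n modn_small // => /eqP ->.
Qed.

Lemma f8_sched_neq n (D D' : seq {set 'I_n}) (i : 'I_n) :
  5 <= n -> update_schedule D -> update_schedule D' ->
  block_index D i <= block_index D (ord_pred i) ->
  block_index D' (ord_pred i) < block_index D' i <= block_index D' (ordS i) ->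
  f8_sched D <> f8_sched D'.
Proof.
move=> n_ge5 sD sD' le_iP lt_PiS eqDD'.
set p := ord_pred (ord_pred (ord_pred i)).
pose x : config n := [ffun c => c != p].
have x_iter k : 0 < k <= 4 -> x (iter k (@ordS n) p) = true.
  move=> /andP [k_gt0 le_k4].
  by rewrite ffunE iter_ordS_neq // k_gt0 (leq_ltn_trans le_k4 n_ge5).
have i_iter : i = iter 3 (@ordS n) p by rewrite /= !ord_predK.
have P1_iter : ord_pred i = iter 2 (@ordS n) p by rewrite i_iter /= ordSK.
have P2_iter : ord_pred (ord_pred i) = iter 1 (@ordS n) p.
  by rewrite P1_iter /= ordSK.
have S_iter : ordS i = iter 4 (@ordS n) p by rewrite i_iter.
have := congr1 (fun f : config n -> config n => f x i) eqDD'.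
rewrite (f8_sched_left_pending sD le_iP); last by rewrite P1_iter x_iter.
rewrite (f8_sched_left_updated sD' lt_PiS) //; first by rewrite ffunE eqxx.
- by rewrite P2_iter x_iter.
- by rewrite P1_iter x_iter.
- by rewrite {1}i_iter x_iter.
- by rewrite S_iter x_iter.
Qed.

Theorem mainTheorem16 (n : nat) (D D' : seq {set 'I_n}) :
  5 <= n ->
  update_schedule D -> update_schedule D' ->
  (exists i : 'I_n,
      [/\ lab D (ordS i) i = Oplus, lab D' (ordS i) i = Oplus
        & lab D (ord_pred i) i <> lab D' (ord_pred i) i]) ->
  (forall j : 'I_n, lab D j (ord_pred j) = lab D' j (ord_pred j)) ->
  f8_sched D <> f8_sched D'.
Proof.
move=> n_ge5 sD sD' [i [+ + +]] _; rewrite /lab.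
case: leqP => // le_iS; case: leqP => // le_iS'.
case: leqP => [le_iP | lt_Pi]; case: leqP => // le_lt_Pi' _ _ _.
- by apply: (f8_sched_neq n_ge5 sD sD' le_iP); rewrite le_lt_Pi'.
- by apply/nesym/(f8_sched_neq n_ge5 sD' sD le_lt_Pi'); rewrite lt_Pi.
Qed.
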